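(* Let $I\subseteq\mathbb{R}$ be an open interval (possibly unbounded), $\Sigma=I\times\mathbb{R}$, and let $F=(P,Q)\in C^1(\Sigma,\mathbb{R}^2)$ be non-singular. If every level set $\{(x,y)\in\Sigma: P(x,y)=c\}$, $c\in\mathbb{R}$, is connected (or every level set $\{(x,y)\in\Sigma: Q(x,y)=c\}$, $c\in\mathbb{R}$, is connected), then $F$ is injective.
   Context: $F$ is non-singular if its Jacobian determinant $d_F=P_xQ_y-P_yQ_x$ is nonzero at every point of $\Sigma$. *)

From HB Require Import structures.
From mathcomp Require Import all_boot all_order all_algebra.
From mathcomp Require Import all_classical all_reals all_analysis.
Set Implicit Arguments. Unset Strict Implicit. Unset Printing Implicit Defensive.
Import Order.TTheory GRing.Theory Num.Theory.
Import numFieldNormedType.Exports.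
Local Open Scope classical_set_scope.
Local Open Scope ring_scope.

Definition strip (R : realType) (I : set R) : set (R * R) := I `*` setT.

Definition dx (R : realType) (f : R * R -> R) (p : R * R) : R := 'D_((1, 0) : R * R) f p.
Definition dy (R : realType) (f : R * R -> R) (p : R * R) : R := 'D_((0, 1) : R * R) f p.

Definition C1_on (R : realType) (S : set (R * R)) (f : R * R -> R) : Prop :=
  forall p, S p ->
    [/\ derivable f p ((1, 0) : R * R), derivable f p ((0, 1) : R * R),
        {for p, continuous (dx f)} & {for p, continuous (dy f)}].

Definition jacobian_det (R : realType) (P Q : R * R -> R) (p : R * R) : R :=
  dx P p * dy Q p - dy P p * dx Q p.

Definition non_singular_on (R : realType) (S : set (R * R)) (P Q : R * R -> R) : Prop :=
  forall p, S p -> jacobian_det P Q p != 0.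

Definition level_set (R : realType) (S : set (R * R)) (f : R * R -> R) (c : R) : set (R * R) :=
  [set p | S p /\ f p = c].

From HB Require Import structures.
From mathcomp Require Import all_boot all_order all_algebra.
From mathcomp Require Import all_classical all_reals all_analysis.
From mathcomp Require Import ring lra.
Set Implicit Arguments. Unset Strict Implicit. Unset Printing Implicit Defensive.
Import Order.TTheory GRing.Theory Num.Theory.
Import numFieldNormedType.Exports.
Local Open Scope classical_set_scope.
Local Open Scope ring_scope.

(* Fix a level set L = {P = c}.  At each point of L one partial derivative of P
   is nonzero, so L is locally the graph of a continuous function (P is strictly
   monotone along one axis).  As the Jacobian does not vanish, F = (P, Q) is
   locally injective (mean value theorem along the axes), hence Q is a continuous
   injective function of the graph parameter; inverting it gives, near each point
   of L, a continuous section sig of Q with values in L, i.e. Q (sig t) = t.  Two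
   sections over intervals that agree at one point agree on the whole (connected)
   intersection, again by local injectivity of F, so they glue.  The points
   reached from p by a section over an open interval thus form a nonempty subset
   of L that is open and closed in L, i.e. all of L when L is connected; as
   Q (sig t) = t, Q p = Q q then forces p = q. *)

Lemma connected_relclopen_eq {T : topologicalType} (A B : set T) :
  connected A -> B `<=` A -> B !=set0 ->
  (forall x, B x -> nbhs x (~` A `|` B)) ->
  (forall x, A x -> closure B x -> B x) -> B = A.
Proof.
move=> cA BA B0 Bop Bcl; apply: cA => //.
- exists (interior (~` A `|` B)); first exact: open_interior.
  apply/seteqP; split=> x.
  + by move=> Bx; split; [exact: BA | exact: Bop].
  + by move=> [Ax /interior_subset [//|]].
- exists (closure B); first exact: closed_closure.
  apply/seteqP; split=> x.
  + by move=> Bx; split; [exact: BA | exact: subset_closure].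
  + by move=> [Ax cx]; exact: Bcl.
Qed.

Lemma neq0_near {T : topologicalType} {R : realFieldType} (f : T -> R) (x : T) :
  {for x, continuous f} -> f x != 0 -> \forall y \near x, f y != 0.
Proof.
move=> cf fx0; have : 0 < `|f x| by rewrite normr_gt0.
move=> /(cvgr_dist_lt _ _ cf); apply: filterS => y.
by apply: contraTneq => ->; rewrite subr0 ltxx.
Qed.

Lemma near_eq_continuous {T U : topologicalType} (f g : T -> U) (t : T) :
  (\forall x \near t, f x = g x) -> {for t, continuous f} -> {for t, continuous g}.
Proof.
move=> fg cf; apply: cvg_trans (near_eq_cvg fg) _.
by rewrite -(nbhs_singleton fg).
Qed.

Lemma closure_eq_continuous {T U : topologicalType} (f g : T -> U) (t : T) :
  hausdorff_space U -> {for t, continuous f} -> {for t, continuous g} ->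
  closure [set x | f x = g x] t -> f t = g t.
Proof.
move=> hU cf cg cl; apply: hU => A B NA NB.
have fA : \forall x \near t, A (f x) := cf _ NA.
have gB : \forall x \near t, B (g x) := cg _ NB.
have [x [fgx [Ax Bx]]] := cl _ (filterI fA gB).
by exists (f x); split => //; rewrite fgx.
Qed.

Lemma continuous_slice_l {T U V : topologicalType} (f : T * U -> V) x y :
  {for (x, y), continuous f} -> {for x, continuous (fun x => f (x, y))}.
Proof.
move=> cf; apply: (@continuous_comp _ _ _ (fun x => (x, y)) f x) => //.
by apply: cvg_pair; [exact: cvg_id | exact: cvg_cst].
Qed.

Lemma continuous_slice_r {T U V : topologicalType} (f : T * U -> V) x y :
  {for (x, y), continuous f} -> {for y, continuous (fun y => f (x, y))}.
Proof.
move=> cf; apply: (@continuous_comp _ _ _ (fun y => (x, y)) f y) => //.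
by apply: cvg_pair; [exact: cvg_cst | exact: cvg_id].
Qed.

Section RealLine.
Variable R : realType.

Lemma ball_normRE (x e y : R) : ball x e y = (`|x - y| < e).
Proof. by rewrite -ball_normE. Qed.

Lemma ballRE (x e y : R) : ball x e y = (x - e < y < x + e).
Proof. by rewrite ball_normRE ltr_distlC. Qed.

Lemma is_interval_ball (x r : R) : is_interval (ball x r).
Proof. by rewrite ball_itv; exact: interval_is_interval. Qed.

Lemma near_in_ball (x e y : R) :
  ball x e y -> \forall z \near y, ball x e z.
Proof. by move=> h; have := @ball_open _ R^o x e; rewrite openE => /(_ y h). Qed.

Lemma is_intervalI (J K : set R) :
  is_interval J -> is_interval K -> is_interval (J `&` K).
Proof. by move=> iJ iK x y [Jx Kx] [Jy Ky] z xzy; split; [exact: (iJ x y) | exact: (iK x y)]. Qed.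

Lemma is_intervalU (J K : set R) : J `&` K !=set0 ->
  is_interval J -> is_interval K -> is_interval (J `|` K).
Proof.
move=> JK /connected_intervalP cJ /connected_intervalP cK.
exact/connected_intervalP/connectedU.
Qed.

Lemma det2_neq0_near (A B C D : R) : A * D - B * C != 0 ->
  exists2 e, 0 < e & forall a b c d,
    ball A e a -> ball B e b -> ball C e c -> ball D e d -> a * d - b * c != 0.
Proof.
move=> det0.
pose det (x : (R * R) * (R * R)) := x.1.1 * x.2.2 - x.1.2 * x.2.1.
have cdet : {for ((A, B), (C, D)), continuous det}.
  by apply: cvgB; apply: cvgM; apply: cvg_comp; (exact: cvg_fst || exact: cvg_snd).
have /nbhs_ballP [e e0 He] := neq0_near cdet det0.
by exists e => // a b c d ha hb hc hd; apply: (He ((a, b), (c, d))).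
Qed.

Lemma det2_neq0_sol0 (A B C D u v : R) : A * D - B * C != 0 ->
  A * u + B * v = 0 -> C * u + D * v = 0 -> u = 0 /\ v = 0.
Proof.
move=> det0 E1 E2.
have Eu : u * (A * D - B * C) = D * (A * u + B * v) - B * (C * u + D * v) by ring.
have Ev : v * (A * D - B * C) = A * (C * u + D * v) - C * (A * u + B * v) by ring.
rewrite E1 E2 !mulr0 subrr in Eu Ev.
by split; apply/eqP; move: Eu Ev => /eqP + /eqP; rewrite !mulf_eq0 (negbTE det0) !orbF.
Qed.

Lemma MVT_ball (phi dphi : R -> R) (z d a b : R) : ball z d a -> ball z d b ->
  (forall x, ball z d x -> is_derive x 1 phi (dphi x)) ->
  exists2 c, ball z d c & phi b - phi a = dphi c * (b - a).
Proof.
wlog ab : a b / a <= b.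
  move=> H ha hb hd; have [/H|/ltW ba] := leP a b; first exact.
  have [c hc e] := H b a ba hb ha hd.
  by exists c => //; rewrite -[LHS]opprB e -mulrN opprB.
move=> za zb hd.
have inab x : a <= x <= b -> ball z d x.
  move: za zb; rewrite !ball_itv /= !in_itv /= => /andP [? ?] /andP [? ?] /andP [? ?].
  by apply/andP; split; lra.
have hd' x : x \in `]a, b[ -> is_derive x 1 phi (dphi x).
  by rewrite in_itv /= => /andP [ax xb]; apply/hd/inab; rewrite !ltW.
have [|c cab E] := MVT_segment ab hd'.
  apply: derivable_within_continuous => x; rewrite in_itv /= => xab.
  by have [] := hd _ (inab _ xab).
by exists c => //; apply: inab; rewrite in_itv /= in cab.
Qed.

Lemma continuous_local_inverse (h : R -> R) (t0 dl : R) : 0 < dl ->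
  (forall t, ball t0 dl t -> {for t, continuous h}) ->
  (forall t1 t2, ball t0 dl t1 -> ball t0 dl t2 -> h t1 = h t2 -> t1 = t2) ->
  exists2 r, 0 < r & exists hinv : R -> R,
    (forall t, ball t0 dl t -> hinv (h t) = t) /\
    (forall v, ball (h t0) r v ->
      [/\ ball t0 dl (hinv v), h (hinv v) = v & {for v, continuous hinv}]).
Proof.
move=> dl0 ch ih.
pose hinv v := xget t0 [set t | ball t0 dl t /\ h t = v].
have hK t : ball t0 dl t -> hinv (h t) = t.
  move=> ht; have [h1 h2] : ball t0 dl (hinv (h t)) /\ h (hinv (h t)) = h t.
    by apply: (@xgetPex _ t0 [set t' | ball t0 dl t' /\ h t' = h t]); exists t.
  exact: ih.
have near_t0 : \forall t \near t0, ball t0 dl t := nbhsx_ballx t0 dl dl0.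
have [cinv cK] := near_can_continuousAcan_sym (filterS hK near_t0) (filterS ch near_t0).
have hinv0 : hinv (h t0) = t0 := hK _ (ballxx _ dl0).
have near_hinv : \forall v \near h t0, ball t0 dl (hinv v).
  by have := nbhs_singleton cinv _ (nbhsx_ballx (hinv (h t0)) _ dl0); rewrite hinv0.
have /nbhs_ballP [r r0 Hr] : \forall v \near h t0,
    [/\ ball t0 dl (hinv v), h (hinv v) = v & {for v, continuous hinv}].
  by apply: filterS (filterI near_hinv (filterI cK cinv)) => v [? []].
by exists r => //; exists hinv.
Qed.

End RealLine.

Section PartialDerivatives.
Variable R : realType.
Implicit Types (f : R * R -> R) (w : R * R).

Lemma is_derive_dx_slice f w : derivable f w ((1, 0) : R * R) ->
  is_derive w.1 1 (fun s => f (s, w.2)) (dx f w).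
Proof.
case: w => a b d.
have E : (fun h : R => h^-1 *: ((f \o shift (a, b)) (h *: ((1, 0) : R * R)) - f (a, b))) =
   (fun h : R => h^-1 *: (((fun s => f (s, b)) \o shift a) (h *: 1) - f (a, b))).
  apply/funext => h /=; congr (_ *: (f (_, _) - _)).
  by rewrite /= ?scaler0 ?mulr0 ?mulr1 ?add0r ?addr0.
apply: DeriveDef; last by rewrite /dx /derive E.
by move: d; rewrite /derivable E.
Qed.

Lemma is_derive_dy_slice f w : derivable f w ((0, 1) : R * R) ->
  is_derive w.2 1 (fun s => f (w.1, s)) (dy f w).
Proof.
case: w => a b d.
have E : (fun h : R => h^-1 *: ((f \o shift (a, b)) (h *: ((0, 1) : R * R)) - f (a, b))) =
   (fun h : R => h^-1 *: (((fun s => f (a, s)) \o shift b) (h *: 1) - f (a, b))).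
  apply/funext => h /=; congr (_ *: (f (_, _) - _)).
  by rewrite /= ?scaler0 ?mulr0 ?mulr1 ?add0r ?addr0.
apply: DeriveDef; last by rewrite /dy /derive E.
by move: d; rewrite /derivable E.
Qed.

End PartialDerivatives.

Section C1Functions.
Variables (R : realType) (S : set (R * R)).
Hypothesis oS : open S.
Implicit Types (f : R * R -> R) (z w : R * R).

Lemma MVT_plane f z d a b : ball z d `<=` S -> C1_on S f ->
  ball z d a -> ball z d b ->
  exists xi eta, [/\ ball z d (xi, b.2), ball z d (a.1, eta) &
    f b - f a = dx f (xi, b.2) * (b.1 - a.1) + dy f (a.1, eta) * (b.2 - a.2)].
Proof.
move=> zdS C [a1 a2] [b1 b2].
have Sx x : ball z.1 d x -> S (x, b.2) by move=> hx; apply: zdS.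
have Sy y : ball z.2 d y -> S (a.1, y) by move=> hy; apply: zdS.
have dfx x : ball z.1 d x -> derivable f (x, b.2) ((1, 0) : R * R) by move=> /Sx /C [].
have dfy y : ball z.2 d y -> derivable f (a.1, y) ((0, 1) : R * R) by move=> /Sy /C [].
have [xi xi1 Exi] := @MVT_ball _ (fun s => f (s, b.2)) (fun s => dx f (s, b.2)) _ _ _ _ a1 b1
  (fun x hx => is_derive_dx_slice (dfx x hx)).
have [eta eta2 Eeta] := @MVT_ball _ (fun s => f (a.1, s)) (fun s => dy f (a.1, s)) _ _ _ _ a2 b2
  (fun y hy => is_derive_dy_slice (dfy y hy)).
exists xi, eta; split => //.
by rewrite -Exi -Eeta addrA subrK -!surjective_pairing.
Qed.

Lemma C1_on_partials_bounded f z : C1_on S f -> S z ->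
  exists2 d, 0 < d & exists M, [/\ 0 < M, ball z d `<=` S &
    forall w, ball z d w -> `|dx f w| <= M /\ `|dy f w| <= M].
Proof.
move=> C zS; have [_ _ cx cy] := C z zS.
have Bx : \forall w \near z, ball (dx f z) 1 (dx f w) := cx _ (nbhsx_ballx _ _ ltr01).
have By : \forall w \near z, ball (dy f z) 1 (dy f w) := cy _ (nbhsx_ballx _ _ ltr01).
have Sz : \forall w \near z, S w := oS zS.
have /nbhs_ballP [d d0 Hd] : \forall w \near z,
    [/\ S w, ball (dx f z) 1 (dx f w) & ball (dy f z) 1 (dy f w)].
  by apply: filterS (filterI Sz (filterI Bx By)) => w [? []].
have near_bound (a b : R) : ball a 1 b -> `|b| <= `|a| + 1.
  by rewrite ball_normRE -lerBlDl distrC => /ltW; apply: le_trans (lerB_dist _ _).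
exists d => //; exists (`|dx f z| + `|dy f z| + 1); split.
- by rewrite ltr_pwDr // addr_ge0.
- by move=> w /Hd [].
move=> w /Hd [_ /near_bound hx /near_bound hy]; split.
  by apply: le_trans hx _; rewrite lerD2r lerDl.
by apply: le_trans hy _; rewrite lerD2r lerDr.
Qed.

Lemma C1_on_continuous f z : C1_on S f -> S z -> {for z, continuous f}.
Proof.
move=> C zS; have [d d0 [M [M0 zdS bM]]] := C1_on_partials_bounded C zS.
apply/cvgrPdist_lt => e e0.
pose r := e / (2 * M).
have r0 : 0 < r by apply: divr_gt0 => //; rewrite mulr_gt0.
have er : e = 2 * M * r by rewrite /r; field; rewrite gt_eqF.
near=> w.
have zdw : ball z d w by near: w; exact: nbhsx_ballx z d d0.
have [zw1 zw2] : ball z r w by near: w; exact: nbhsx_ballx z r r0.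
have [xi [eta [hxi heta E]]] := MVT_plane zdS C (ballxx z d0) zdw.
rewrite -normrN opprB E; apply: le_lt_trans (ler_normD _ _) _; rewrite !normrM.
have [hA _] := bM _ hxi; have [_ hB] := bM _ heta.
move: zw1 zw2; rewrite !ball_normRE !(distrC z.1) !(distrC z.2) => hu hv.
have h1 : `|dx f (xi, w.2)| * `|w.1 - z.1| <= M * `|w.1 - z.1| by rewrite ler_wpM2r.
have h2 : `|dy f (z.1, eta)| * `|w.2 - z.2| <= M * `|w.2 - z.2| by rewrite ler_wpM2r.
have h3 : M * `|w.1 - z.1| < M * r by rewrite ltr_pM2l.
have h4 : M * `|w.2 - z.2| < M * r by rewrite ltr_pM2l.
lra.
Unshelve. all: by end_near.
Qed.

Lemma C1_on_locally_injective P Q z : C1_on S P -> C1_on S Q -> S z ->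
  jacobian_det P Q z != 0 -> exists2 d, 0 < d &
    forall a b, ball z d a -> ball z d b -> P a = P b -> Q a = Q b -> a = b.
Proof.
move=> CP CQ zS J0; have [e e0 He] := det2_neq0_near J0.
have [_ _ cPx cPy] := CP z zS; have [_ _ cQx cQy] := CQ z zS.
have near_e (g : R * R -> R) : {for z, continuous g} -> \forall w \near z, ball (g z) e (g w).
  by move=> cg; apply: cg; apply: nbhsx_ballx.
have Sz : \forall w \near z, S w := oS zS.
have /nbhs_ballP [d d0 Hd] : \forall w \near z, [/\ S w,
    ball (dx P z) e (dx P w), ball (dy P z) e (dy P w),
    ball (dx Q z) e (dx Q w) & ball (dy Q z) e (dy Q w)].
  apply: filterS (filterI Sz (filterI (filterI (near_e _ cPx) (near_e _ cPy))
    (filterI (near_e _ cQx) (near_e _ cQy)))).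
  by move=> w [? [[? ?] [? ?]]].
have zdS : ball z d `<=` S by move=> w /Hd [].
exists d => // a b za zb Pab Qab.
have [x1 [y1 [hx1 hy1 EP]]] := MVT_plane zdS CP za zb.
have [x2 [y2 [hx2 hy2 EQ]]] := MVT_plane zdS CQ za zb.
rewrite Pab subrr in EP; rewrite Qab subrr in EQ.
have [_ hA _ _ _] := Hd _ hx1; have [_ _ hB _ _] := Hd _ hy1.
have [_ _ _ hC _] := Hd _ hx2; have [_ _ _ _ hD] := Hd _ hy2.
have [/subr0_eq E1 /subr0_eq E2] := det2_neq0_sol0 (He _ _ _ _ hA hB hC hD) (esym EP) (esym EQ).
by rewrite [a]surjective_pairing [b]surjective_pairing E1 E2.
Qed.
End C1Functions.

(* [s0] is a junk value, returned when [phi (t, _)] takes the value [c] nowhere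
   in [ball s0 e]. *)
Definition implicit_root {R : realType} (phi : R * R -> R) (c s0 e t : R) : R :=
  xget s0 [set s | ball s0 e s /\ phi (t, s) = c].

Section ImplicitFunction.
Variables (R : realType) (phi : R * R -> R) (t0 s0 e c : R).
Hypotheses (e0 : 0 < e) (phi0 : phi (t0, s0) = c).
Hypothesis phi_cont :
  forall t s, ball t0 e t -> ball s0 e s -> {for (t, s), continuous phi}.
Hypothesis phi_incr : forall t s1 s2, ball t0 e t -> ball s0 e s1 -> ball s0 e s2 ->
  s1 < s2 -> phi (t, s1) < phi (t, s2).
Local Notation g := (implicit_root phi c s0 e).

Lemma implicit_root_uniq t s1 s2 : ball t0 e t -> ball s0 e s1 -> ball s0 e s2 ->
  phi (t, s1) = phi (t, s2) -> s1 = s2.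
Proof.
move=> ht h1 h2 E; have [lt12|lt21|//] := ltgtP s1 s2.
- by have := phi_incr ht h1 h2 lt12; rewrite E ltxx.
- by have := phi_incr ht h2 h1 lt21; rewrite E ltxx.
Qed.

Lemma implicit_root_between t a b : ball t0 e t -> ball s0 e a -> ball s0 e b ->
  phi (t, a) < c -> c < phi (t, b) -> a < g t < b /\ phi (t, g t) = c.
Proof.
move=> ht ha hb lo hi.
have ab : a <= b.
  by rewrite leNgt; apply/negP => ba; have := phi_incr ht hb ha ba; lra.
have inab s : a <= s <= b -> ball s0 e s := @is_interval_ball R s0 e a b ha hb s.
have cw : {within `[a, b], continuous (fun s => phi (t, s))}.
  apply: continuous_in_subspaceT => s; rewrite inE /= in_itv /= => /inab hs.
  exact: continuous_slice_r (phi_cont ht hs).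
have [|s] := @IVT _ _ a b c ab cw; first by rewrite ge_min (ltW lo) le_max (ltW hi) orbT.
rewrite in_itv /= => sab phis; have hs := inab s sab.
have [gin gphi] : ball s0 e (g t) /\ phi (t, g t) = c.
  by apply: (@xgetPex _ s0 [set s | ball s0 e s /\ phi (t, s) = c]); exists s.
have -> : g t = s by apply: implicit_root_uniq ht gin hs _; rewrite gphi phis.
split=> //; case/andP: sab => sa sb; apply/andP; split.
- by rewrite lt_neqAle sa andbT; apply/eqP => eas; move: lo; rewrite eas phis ltxx.
- by rewrite lt_neqAle sb andbT; apply/eqP => esb; move: hi; rewrite -esb phis ltxx.
Qed.

Lemma implicit_root_near t a b : ball t0 e t -> ball s0 e a -> ball s0 e b ->
  phi (t, a) < c -> c < phi (t, b) ->
  \forall t' \near t, a < g t' < b /\ phi (t', g t') = c.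
Proof.
move=> ht ha hb lo hi.
have lo' : \forall t' \near t, phi (t', a) < c
  := cvgr_lt _ (continuous_slice_l (phi_cont ht ha)) _ lo.
have hi' : \forall t' \near t, c < phi (t', b)
  := cvgr_gt _ (continuous_slice_l (phi_cont ht hb)) _ hi.
near=> t'; apply: implicit_root_between => //; near: t'.
- exact: near_in_ball ht.
- exact: lo'.
- exact: hi'.
Unshelve. all: by end_near.
Qed.

Lemma implicit_function : exists2 dl, 0 < dl & g t0 = s0 /\ forall t, ball t0 dl t ->
  [/\ ball t0 e t, ball s0 e (g t), phi (t, g t) = c & {for t, continuous g}].
Proof.
have [h h0 he] : exists2 h : R, 0 < h & h + h = e by exists (e / 2); move: e0; lra.
have t0e : ball t0 e t0 := ballxx _ e0.
have s0e : ball s0 e s0 := ballxx _ e0.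
have loh : ball s0 e (s0 - h) by rewrite ballRE; apply/andP; split; lra.
have hih : ball s0 e (s0 + h) by rewrite ballRE; apply/andP; split; lra.
have lo : phi (t0, s0 - h) < c by rewrite -phi0; apply: phi_incr => //; lra.
have hi : c < phi (t0, s0 + h) by rewrite -phi0; apply: phi_incr => //; lra.
have /nbhs_ballP [dl dl0 Hdl] : \forall t \near t0,
    ball t0 e t /\ (s0 - h < g t < s0 + h /\ phi (t, g t) = c).
  exact: filterI (near_in_ball t0e) (implicit_root_near t0e loh hih lo hi).
exists dl => //; split.
  have [_ [/andP [? ?] gphi]] := Hdl _ (ballxx _ dl0).
  apply: implicit_root_uniq t0e _ s0e _; last by rewrite gphi.
  by rewrite ballRE; apply/andP; split; lra.
move=> t /Hdl [ht [/andP [gt1 gt2] gphi]].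
have gin : ball s0 e (g t) by rewrite ballRE; apply/andP; split; lra.
split=> //; apply/cvgrPdist_lt => eps eps0.
have [ep [ep0 epe eph]] : exists ep, [/\ 0 < ep, ep <= eps & ep <= h].
  by exists (Num.min eps h); rewrite lt_min eps0 h0 !ge_min !lexx orbT.
have loe : ball s0 e (g t - ep) by rewrite ballRE; apply/andP; split; lra.
have hie : ball s0 e (g t + ep) by rewrite ballRE; apply/andP; split; lra.
have lo' : phi (t, g t - ep) < c.
  by rewrite -[X in _ < X]gphi; apply: phi_incr ht loe gin _; lra.
have hi' : c < phi (t, g t + ep).
  by rewrite -[X in X < _]gphi; apply: phi_incr ht gin hie _; lra.
apply: filterS (implicit_root_near ht loe hie lo' hi') => t' [/andP [? ?] _].
by rewrite ltr_distlC; apply/andP; split; lra.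
Qed.
End ImplicitFunction.

(* A level set of P is a graph over the x-axis where [dy P] does not vanish and
   over the y-axis otherwise; [swap_if true] exchanges the axes, so that both
   cases become graphs [s = g t] over the first coordinate. *)
Definition swap_if {T : Type} (sw : bool) (w : T * T) : T * T :=
  if sw then (w.2, w.1) else w.

Lemma swap_ifK {T : Type} (sw : bool) : involutive (@swap_if T sw).
Proof. by case: sw => -[]. Qed.

Lemma continuous_swap_if {T : topologicalType} (sw : bool) : continuous (@swap_if T sw).
Proof. by case: sw => w; [exact: cvg_pair cvg_snd cvg_fst | exact: cvg_id]. Qed.

Lemma ball_swap_if {R : numDomainType} {T : pseudoMetricType R} (sw : bool) (z w : T * T) e :
  ball (swap_if sw z) e (swap_if sw w) <-> ball z e w.
Proof. by case: sw => //; split=> -[]. Qed.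

Lemma ball_swap_if_pair {R : numDomainType} {T : pseudoMetricType R} (sw : bool) (z : T * T)
    e t s :
  ball (swap_if sw z).1 e t -> ball (swap_if sw z).2 e s -> ball z e (swap_if sw (t, s)).
Proof. by move=> ht hs; apply/(ball_swap_if sw); rewrite swap_ifK. Qed.

Definition dswap {R : realType} (sw : bool) (f : R * R -> R) : R * R -> R :=
  if sw then dx f else dy f.

Section SwapCoordinates.
Variables (R : realType) (S : set (R * R)).
Implicit Types (f : R * R -> R) (z : R * R).

Lemma is_derive_dswap sw f t s : C1_on S f -> S (swap_if sw (t, s)) ->
  is_derive s 1 (fun s => f (swap_if sw (t, s))) (dswap sw f (swap_if sw (t, s))).
Proof.
case: sw => C /C [dfx dfy _ _].
- exact: is_derive_dx_slice dfx.
- exact: is_derive_dy_slice dfy.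
Qed.

Lemma continuous_dswap sw f z : C1_on S f -> S z -> {for z, continuous (dswap sw f)}.
Proof. by case: sw => C /C []. Qed.

Lemma non_singular_dswap P Q z : non_singular_on S P Q -> S z ->
  exists sw, dswap sw P z != 0.
Proof.
move=> NS zS; have [dy0|] := eqVneq (dy P z) 0; last by exists false.
exists true; apply: contra (NS z zS); rewrite /dswap => /eqP dx0.
by rewrite /jacobian_det dx0 dy0 !mul0r subrr.
Qed.
End SwapCoordinates.

Section LevelSetGraph.
Variables (R : realType) (S : set (R * R)).
Hypothesis oS : open S.
Variables (P : R * R -> R) (c : R) (sw : bool) (z : R * R).
Hypotheses (CP : C1_on S P) (Lz : level_set S P c z) (dz : dswap sw P z != 0).
Local Notation t0 := (swap_if sw z).1.
Local Notation s0 := (swap_if sw z).2.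
(* Multiplying by this sign makes P increasing along the second coordinate. *)
Local Notation sg := (Num.sg (dswap sw P z)).

Lemma dswap_sign_near : exists2 e, 0 < e &
  forall w, ball z e w -> S w /\ 0 < sg * dswap sw P w.
Proof.
case: Lz => zS _.
have cpos : {for z, continuous (fun w => sg * dswap sw P w)}.
  by apply: cvgM; [exact: cvg_cst | exact: continuous_dswap CP zS].
have sgz : 0 < sg * dswap sw P z by rewrite -normrEsg normr_gt0.
have pos : \forall w \near z, 0 < sg * dswap sw P w := cvgr_gt _ cpos _ sgz.
have Sz : \forall w \near z, S w := oS zS.
have /nbhs_ballP [e e0 He] : \forall w \near z, S w /\ 0 < sg * dswap sw P w.
  near=> w; split; near: w; [exact: Sz | exact: pos].
by exists e.
Unshelve. all: by end_near.
Qed.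

Lemma signed_slice_incr e t s1 s2 :
  (forall w, ball z e w -> S w /\ 0 < sg * dswap sw P w) ->
  ball t0 e t -> ball s0 e s1 -> ball s0 e s2 -> s1 < s2 ->
  sg * P (swap_if sw (t, s1)) < sg * P (swap_if sw (t, s2)).
Proof.
move=> zeS ht h1 h2 lt12.
have zeS' s : ball s0 e s -> S (swap_if sw (t, s)) /\ 0 < sg * dswap sw P (swap_if sw (t, s)).
  by move=> hs; apply/zeS/ball_swap_if_pair.
have [x /zeS' [_ pos] E] := @MVT_ball _ (fun s => P (swap_if sw (t, s)))
  (fun s => dswap sw P (swap_if sw (t, s))) s0 e s1 s2 h1 h2
  (fun x hx => is_derive_dswap CP (zeS' x hx).1).
by rewrite -subr_gt0 -mulrBr E mulrA mulr_gt0 ?subr_gt0.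
Qed.

Lemma level_set_graph d : 0 < d ->
  exists2 e, 0 < e & e <= d /\ exists2 dl, 0 < dl & exists g : R -> R, [/\ g t0 = s0,
    forall t, ball t0 dl t -> [/\ ball z e (swap_if sw (t, g t)),
      level_set S P c (swap_if sw (t, g t)) & {for t, continuous g}] &
    forall w, ball z e w -> P w = c -> ball t0 dl (swap_if sw w).1 ->
      g (swap_if sw w).1 = (swap_if sw w).2].
Proof.
move=> d0; case: Lz => zS Pz.
have sg0 : sg != 0 by rewrite sgr_eq0.
have [e1 e10 He1] := dswap_sign_near.
have [e [e0 ee1 ed]] : exists e, [/\ 0 < e, e <= e1 & e <= d].
  by exists (Num.min e1 d); rewrite lt_min e10 d0 !ge_min !lexx orbT.
have zeS w : ball z e w -> S w /\ 0 < sg * dswap sw P w.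
  by move=> h; apply: He1; apply: le_ball h.
pose phi ts := sg * P (swap_if sw ts).
have phi0 : phi (t0, s0) = sg * c by rewrite /phi -surjective_pairing swap_ifK Pz.
have phi_cont t s : ball t0 e t -> ball s0 e s -> {for (t, s), continuous phi}.
  move=> ht hs; apply: cvgM; first exact: cvg_cst.
  apply: (@continuous_comp _ _ _ (swap_if sw) P (t, s)); first exact: continuous_swap_if.
  by apply: (C1_on_continuous oS CP); exact: (zeS _ (ball_swap_if_pair ht hs)).1.
have phi_incr t s1 s2 : ball t0 e t -> ball s0 e s1 -> ball s0 e s2 -> s1 < s2 ->
  phi (t, s1) < phi (t, s2) := signed_slice_incr zeS.
have [dl dl0 [g0 Hg]] := implicit_function e0 phi0 phi_cont phi_incr.
exists e => //; split => //; exists dl => //.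
exists (implicit_root phi (sg * c) s0 e); split => //.
  move=> t /Hg [ht gin gphi gcont]; have zg := ball_swap_if_pair ht gin.
  by split => //; split; [exact: (zeS _ zg).1 | apply: (mulfI sg0)].
move=> w zw Pw hw; have [ht gin gphi _] := Hg _ hw.
have [hw1 hw2] : ball (swap_if sw z) e (swap_if sw w) by apply/ball_swap_if.
apply: (implicit_root_uniq phi_incr ht gin hw2).
by rewrite gphi /phi -surjective_pairing swap_ifK Pw.
Qed.

Lemma level_set_curve d : 0 < d ->
  exists2 e, 0 < e & e <= d /\ exists2 dl, 0 < dl & exists gamma : R -> R * R,
    [/\ gamma t0 = z,
    forall t, ball t0 dl t -> [/\ ball z e (gamma t), level_set S P c (gamma t),
      (swap_if sw (gamma t)).1 = t & {for t, continuous gamma}] &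
    forall w, ball z e w -> level_set S P c w -> ball t0 dl (swap_if sw w).1 ->
      gamma (swap_if sw w).1 = w].
Proof.
move=> d0; have [e e0 [ed [dl dl0 [g [g0 Hg gU]]]]] := level_set_graph d0.
exists e => //; split => //; exists dl => //; exists (fun t => swap_if sw (t, g t)); split.
- by rewrite g0 -surjective_pairing swap_ifK.
- move=> t /Hg [zg Lg cg]; split; rewrite ?swap_ifK //.
  have cpair : {for t, continuous (fun t => (t, g t))} by exact: cvg_pair cvg_id cg.
  exact: continuous_comp cpair (@continuous_swap_if _ sw (t, g t)).
- by move=> w zw [_ Pw] hw; rewrite gU // -surjective_pairing swap_ifK.
Qed.
End LevelSetGraph.

Section LevelSections.
Variables (R : realType) (S : set (R * R)).
Hypothesis oS : open S.
Variables (P Q : R * R -> R) (c : R).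
Hypotheses (CP : C1_on S P) (CQ : C1_on S Q) (NS : non_singular_on S P Q).
Local Notation L := (level_set S P c).

Definition level_section (J : set R) (sig : R -> R * R) : Prop :=
  forall t, J t -> [/\ L (sig t), Q (sig t) = t & {for t, continuous sig}].

Lemma level_set_chart z : L z -> exists2 r, 0 < r & exists tau : R -> R * R,
  [/\ tau (Q z) = z, level_section (ball (Q z) r) tau &
      \forall w \near z, L w -> exists2 v, ball (Q z) r v & tau v = w].
Proof.
move=> Lz; have zS := Lz.1.
have [sw dz] := non_singular_dswap NS zS.
have [dF dF0 injF] := C1_on_locally_injective oS CP CQ zS (NS zS).
have [e e0 [edF [dl dl0 [gamma [gamma0 Hg gU]]]]] := level_set_curve oS CP Lz dz dF0.
set t0 := (swap_if sw z).1 in gamma0 Hg gU.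
have hcont t : ball t0 dl t -> {for t, continuous (Q \o gamma)}.
  move=> /Hg [_ [gS _] _ cg]; apply: continuous_comp cg _.
  exact: (C1_on_continuous oS CQ).
have hinj t1 t2 : ball t0 dl t1 -> ball t0 dl t2 ->
    (Q \o gamma) t1 = (Q \o gamma) t2 -> t1 = t2.
  move=> h1 h2 E; have [b1 [_ P1] g1 _] := Hg _ h1; have [b2 [_ P2] g2 _] := Hg _ h2.
  have := injF _ _ (le_ball edF b1) (le_ball edF b2) (etrans P1 (esym P2)) E.
  by move=> /(congr1 (fun w => (swap_if sw w).1)); rewrite g1 g2.
have [r r0 [hinv [hK Hr]]] := continuous_local_inverse dl0 hcont hinj.
have hQ : (Q \o gamma) t0 = Q z by rewrite /= gamma0.
exists r => //; exists (gamma \o hinv); split.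
- by rewrite /= -hQ hK ?gamma0 //; exact: ballxx.
- move=> v; rewrite -hQ => /Hr [hv hhv chv]; have [_ Lg _ cg] := Hg _ hv.
  by split => //; exact: continuous_comp chv cg.
have cfst : {for z, continuous (fun w => (swap_if sw w).1)}.
  by apply: continuous_comp; [exact: continuous_swap_if | exact: cvg_fst].
have cQ := C1_on_continuous oS CQ zS.
near=> w => Lw.
have zw : ball z e w by near: w; exact: nbhsx_ballx z e e0.
have hw : ball t0 dl (swap_if sw w).1 by near: w; apply: cfst; exact: nbhsx_ballx.
have Qw : ball (Q z) r (Q w) by near: w; apply: cQ; exact: nbhsx_ballx.
have wE := gU _ zw Lw hw.
by exists (Q w) => //; have := hK _ hw; rewrite /= wE => ->.
Unshelve. all: by end_near.
Qed.

Lemma level_section_uniq (J K : set R) (sig tau : R -> R * R) (t0 : R) :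
  open J -> is_interval J -> open K -> is_interval K ->
  level_section J sig -> level_section K tau -> J t0 -> K t0 -> sig t0 = tau t0 ->
  forall t, J t -> K t -> sig t = tau t.
Proof.
move=> oJ iJ oK iK Ssig Stau Jt0 Kt0 e0.
have cJK : connected (J `&` K) by apply/connected_intervalP; exact: is_intervalI.
suff E : [set t | (J `&` K) t /\ sig t = tau t] = J `&` K.
  by move=> t Jt Kt; have : (J `&` K) t by []; rewrite -E => -[].
apply: connected_relclopen_eq => //; first by move=> t [].
- by exists t0.
- move=> t [[Jt Kt] et].
  have [[sS Ps] _ cs] := Ssig t Jt; have [_ _ ct] := Stau t Kt.
  have [dF dF0 injF] := C1_on_locally_injective oS CP CQ sS (NS sS).
  have nJK : \forall t' \near t, (J `&` K) t'.
    by have := openI oJ oK; rewrite openE => /(_ t (conj Jt Kt)).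
  have ns := cs _ (nbhsx_ballx _ _ dF0); have nt := ct _ (nbhsx_ballx _ _ dF0).
  near=> t'; right; have [Jt' Kt'] : (J `&` K) t' by near: t'.
  split => //; have [[_ Ps'] Qs' _] := Ssig t' Jt'; have [[_ Pt'] Qt' _] := Stau t' Kt'.
  apply: injF; [near: t'; exact: ns | rewrite et; near: t'; exact: nt | | ].
  + by rewrite Ps' Pt'.
  + by rewrite Qs' Qt'.
- move=> t [Jt Kt] cl; split => //.
  have [_ _ cs] := Ssig t Jt; have [_ _ ct] := Stau t Kt.
  apply: (closure_eq_continuous _ cs ct); first exact: norm_hausdorff.
  by apply: closure_subset cl => t' [].
Unshelve. all: by end_near.
Qed.

Lemma level_section_glue (J K : set R) (sig tau : R -> R * R) (t0 : R) :
  open J -> is_interval J -> open K -> is_interval K ->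
  level_section J sig -> level_section K tau -> J t0 -> K t0 -> sig t0 = tau t0 ->
  exists rho, [/\ level_section (J `|` K) rho,
    forall t, J t -> rho t = sig t & forall t, K t -> rho t = tau t].
Proof.
move=> oJ iJ oK iK Ssig Stau Jt0 Kt0 e0.
have U := level_section_uniq oJ iJ oK iK Ssig Stau Jt0 Kt0 e0.
pose rho t := if `[< J t >] then sig t else tau t.
have rJ t : J t -> rho t = sig t by move=> Jt; rewrite /rho asboolT.
have rK t : K t -> rho t = tau t.
  by move=> Kt; rewrite /rho; case: asboolP => // Jt; exact: U.
exists rho; split => // t [Jt|Kt].
- have [Ls Qs cs] := Ssig t Jt; rewrite rJ //; split => //.
  apply: near_eq_continuous cs; near=> t'; apply/esym/rJ; near: t'; exact: oJ.
- have [Ls Qs cs] := Stau t Kt; rewrite rK //; split => //.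
  apply: near_eq_continuous cs; near=> t'; apply/esym/rK; near: t'; exact: oK.
Unshelve. all: by end_near.
Qed.

Definition section_reachable (p x : R * R) : Prop :=
  exists (J : set R) (sig : R -> R * R), [/\ open J, is_interval J,
  level_section J sig, J (Q p) /\ sig (Q p) = p & J (Q x) /\ sig (Q x) = x].

Lemma section_reachable_extend p y r (tau : R -> R * R) v0 v : section_reachable p y ->
  level_section (ball v0 r) tau -> ball v0 r (Q y) -> tau (Q y) = y -> ball v0 r v ->
  section_reachable p (tau v).
Proof.
move=> [J [sig [oJ iJ Ssig [Jp sp] [Jy sy]]]] Stau vy ty hv.
have [rho [Srho rJ rK]] := level_section_glue oJ iJ (ball_open _ _) (@is_interval_ball _ v0 r)
  Ssig Stau Jy vy (etrans sy (esym ty)).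
have [_ Qtv _] := Stau v hv.
exists (J `|` ball v0 r), rho; split.
- exact: openU oJ (ball_open _ _).
- by apply: (is_intervalU _ iJ (@is_interval_ball _ v0 r)); exists (Q y).
- exact: Srho.
- by split; [left | rewrite rJ].
- by rewrite Qtv; split; [right | rewrite rK].
Qed.

Lemma section_reachable_level_set p x : section_reachable p x -> L x.
Proof. by move=> [J [sig [_ _ Ssig _ [Jx <-]]]]; have [] := Ssig _ Jx. Qed.

Lemma connected_level_set_inj p q : connected L -> L p -> L q -> Q p = Q q -> p = q.
Proof.
move=> cL Lp Lq Qpq.
suff : section_reachable p q by case=> J [sig [_ _ _ [_ sp] [_ sq]]]; rewrite -sq -Qpq sp.
suff -> : section_reachable p = L by [].
apply: connected_relclopen_eq => //.
- exact: section_reachable_level_set.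
- have [r r0 [tau [tp Stau _]]] := level_set_chart Lp.
  have Qpr : ball (Q p) r (Q p) := ballxx _ r0.
  exists p, (ball (Q p) r), tau.
  by split => //; [exact: ball_open | exact: is_interval_ball].
- move=> x Rx; have Lx := section_reachable_level_set Rx.
  have [r r0 [tau [tx Stau near_x]]] := level_set_chart Lx.
  apply: filterS near_x => w hw; have [Lw|] := pselect (L w); last by left.
  right; have [v hv <-] := hw Lw.
  by apply: section_reachable_extend Rx Stau _ tx hv; exact: ballxx.
- move=> x Lx cl; have [r r0 [tau [tx Stau near_x]]] := level_set_chart Lx.
  have [y [Ry Ny]] := cl _ near_x.
  have [v hv tv] := Ny (section_reachable_level_set Ry).
  have [_ Qv _] := Stau v hv.
  by rewrite -tx; apply: section_reachable_extend Ry Stau _ _ (ballxx _ r0); rewrite -tv Qv.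
Qed.
End LevelSections.

Lemma open_strip (R : realType) (I : set R) : open I -> open (strip I).
Proof.
rewrite !openE => oI [x y] [Ix _].
by exists (I, setT); [split; [exact: oI | exact: filterT] | move=> [a b] [] ].
Qed.

Lemma non_singular_on_sym (R : realType) (S : set (R * R)) (P Q : R * R -> R) :
  non_singular_on S P Q -> non_singular_on S Q P.
Proof.
move=> NS w /NS; apply: contra => /eqP J0.
have -> : jacobian_det P Q w = - jacobian_det Q P w by rewrite /jacobian_det; ring.
by rewrite J0 oppr0.
Qed.

Theorem lemma1 (R : realType) (I : set R) (P Q : R * R -> R) :
  open I -> is_interval I ->
  C1_on (strip I) P -> C1_on (strip I) Q ->
  non_singular_on (strip I) P Q ->
  ((forall c : R, connected (level_set (strip I) P c)) \/
   (forall c : R, connected (level_set (strip I) Q c))) ->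
  forall p q : R * R, strip I p -> strip I q ->
    (P p, Q p) = (P q, Q q) -> p = q.
Proof.
move=> /open_strip oS _ CP CQ NS [cP|cQ] p q Sp Sq [Ppq Qpq].
- have Lp : level_set (strip I) P (P p) p by [].
  have Lq : level_set (strip I) P (P p) q by rewrite Ppq.
  exact (connected_level_set_inj oS CP CQ NS (cP (P p)) Lp Lq Qpq).
- have Lp : level_set (strip I) Q (Q p) p by [].
  have Lq : level_set (strip I) Q (Q p) q by rewrite Qpq.
  exact (connected_level_set_inj oS CQ CP (non_singular_on_sym NS) (cQ (Q p)) Lp Lq Ppq).
Qed.
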